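(* Let $\mathcal H$ be a Hilbert space with $\dim\mathcal H<\infty$ and $T:\mathcal B_*(\mathcal H)\to\mathcal B_*(\mathcal H)$ a channel. Then $$\|T-\mathrm{id}\|\le 4\sup_{\psi\in\mathcal H,\ \|\psi\|=1}\sqrt{1-\langle\psi|T(|\psi\rangle\langle\psi|)|\psi\rangle}.$$
   Context: For a Hilbert space $\mathcal H$, $\mathcal B_*(\mathcal H)$ denotes the trace-class operators on $\mathcal H$ with the trace norm $\|A\|_1=\operatorname{tr}\sqrt{A^*A}$. A channel is a completely positive trace-preserving linear map (Schrödinger picture). For a linear map $X:\mathcal B_*(\mathcal H)\to\mathcal B_*(\mathcal H)$, $\|X\|=\sup_{\|\rho\|_1\le1}\|X(\rho)\|_1$; $\mathrm{id}$ is the identity map. *)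

From HB Require Import structures.
From mathcomp Require Import all_boot all_order all_algebra.
From mathcomp Require Import boolp classical_sets reals.
From mathcomp Require Import complex.
Set Implicit Arguments. Unset Strict Implicit. Unset Printing Implicit Defensive.
Import Order.TTheory GRing.Theory Num.Theory.
Local Open Scope ring_scope.

Section QDefs.
Variable R : realType.
Local Notation C := (R[i]).

Definition adj (m k : nat) (A : 'M[C]_(m, k)) : 'M[C]_(k, m) := (map_mx Num.conj A)^T.

(* positive semidefinite: <v, A v> >= 0 for all v (complex order: real and >= 0) *)
Definition psd (n : nat) (A : 'M[C]_n) : Prop :=
  forall v : 'cV[C]_n, 0 <= (adj v *m A *m v) 0 0.

(* trace norm ||A||_1 = tr sqrt(A^* A), where sqrt(A^* A) is the (unique)
   positive semidefinite square root of A^* A *)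
Definition trnorm (n : nat) (A : 'M[C]_n) : R :=
  xget 0 [set t : R | exists B : 'M[C]_n,
     psd B /\ B *m B = adj A *m A /\ \tr B = (t%:C)%C].

Definition opnorm (n : nat) (X : 'M[C]_n -> 'M[C]_n) : R :=
  sup [set trnorm (X rho) | rho in [set rho : 'M[C]_n | trnorm rho <= 1]].

(* an element of M_m (x) M_n, written as an m x m array of n x n blocks;
   positivity of the corresponding (m n) x (m n) matrix *)
Definition block_psd (m n : nat) (X : 'I_m -> 'I_m -> 'M[C]_n) : Prop :=
  forall v : 'I_m -> 'cV[C]_n,
    0 <= \sum_(i < m) \sum_(j < m) (adj (v i) *m X i j *m v j) 0 0.

Definition completely_positive (n : nat) (T : 'M[C]_n -> 'M[C]_n) : Prop :=
  forall (m : nat) (X : 'I_m -> 'I_m -> 'M[C]_n),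
    block_psd X -> block_psd (fun i j => T (X i j)).

Definition trace_preserving (n : nat) (T : 'M[C]_n -> 'M[C]_n) : Prop :=
  forall rho, \tr (T rho) = \tr rho.

Definition channel (n : nat) (T : {linear 'M[C]_n -> 'M[C]_n}) : Prop :=
  completely_positive T /\ trace_preserving T.

End QDefs.

From HB Require Import structures.
From mathcomp Require Import all_boot all_order all_algebra.
From mathcomp Require Import boolp classical_sets reals.
From mathcomp Require Import complex.
From mathcomp Require Import ring.
Set Implicit Arguments. Unset Strict Implicit. Unset Printing Implicit Defensive.
Import Order.TTheory GRing.Theory Num.Theory.
Local Open Scope ring_scope.
Local Open Scope sesquilinear_scope.

(* The trace norm is dual to the operator norm: ||X||_1 = tr (W X) for a contraction W
   obtained from a singular value decomposition of X, so it suffices to bound the linear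
   functional Phi M = tr (W (T M - M)).  On a pure state |psi><psi|, writing T |psi><psi|
   as a convex combination of pure states |phi_k><phi_k|, Phi is an average of
   <phi_k|W|phi_k> - <psi|W|psi>; for unit vectors each such difference is at most
   2 sqrt (1 - |<psi|phi_k>|^2), and concavity of the square root bounds the average by
   2 sqrt (1 - <psi|T |psi><psi| |psi>).  A general rho is a sum of its singular values
   times rank-one operators |g><q| with |g|, |q| <= 1, and polarization writes each |g><q|
   through four pure states; this costs the remaining factor 2. *)

Lemma mulmx_diag_sum (R : comPzRingType) m k p (A : 'M[R]_(m, k)) (d : 'rV[R]_k)
    (B : 'M[R]_(k, p)) :
  A *m diag_mx d *m B = \sum_l d 0 l *: (col l A *m row l B).
Proof.
apply/matrixP => i j; rewrite mul_mx_diag !mxE summxE; apply: eq_bigr => l _.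
by rewrite !mxE big_ord1 !mxE mulrCA mulrA.
Qed.

Section Adjoint.
Variable C : numClosedFieldType.

Lemma trmxC_mul m k p (A : 'M[C]_(m, k)) (B : 'M[C]_(k, p)) :
  (A *m B)^t* = B^t* *m A^t*.
Proof. by rewrite trmx_mul map_mxM. Qed.

Lemma trmxCD m k (A B : 'M[C]_(m, k)) : (A + B)^t* = A^t* + B^t*.
Proof. by apply/matrixP => i j; rewrite !mxE rmorphD. Qed.

Lemma trmxCN m k (A : 'M[C]_(m, k)) : (- A)^t* = - A^t*.
Proof. by apply/matrixP => i j; rewrite !mxE rmorphN. Qed.

Lemma trmxCZ m k a (A : 'M[C]_(m, k)) : (a *: A)^t* = a^* *: A^t*.
Proof. by apply/matrixP => i j; rewrite !mxE rmorphM. Qed.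

Lemma trmxC_diag k (d : 'rV[C]_k) : (diag_mx d)^t* = diag_mx (map_mx Num.conj d).
Proof. by apply/matrixP => i j; rewrite !mxE rmorphMn eq_sym; case: eqP => [->|]. Qed.

Lemma unitarymx_trCmul n (P : 'M[C]_n) : P \is unitarymx -> P^t* *m P = 1%:M.
Proof. by move=> uP; rewrite -invmx_unitary // mulVmx // unitarymx_unit. Qed.

End Adjoint.

Section Braket.
Variable C : numClosedFieldType.

Definition braket n (u v : 'cV[C]_n) : C := (u^t* *m v) 0 0.

Definition matel n (A : 'M[C]_n) (u v : 'cV[C]_n) : C := (u^t* *m A *m v) 0 0.

Lemma braket_matel n (u v : 'cV[C]_n) : braket u v = matel 1%:M u v.
Proof. by rewrite /matel mulmx1. Qed.

Lemma braketE n (u v : 'cV[C]_n) : braket u v = \sum_i (u i 0)^* * v i 0.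
Proof. by rewrite /braket mxE; apply: eq_bigr => i _; rewrite !mxE. Qed.

Lemma braket_dotmx n (u v : 'cV[C]_n) : braket u v = dotmx v^T u^T.
Proof. by rewrite braketE dotmxE mxE; apply: eq_bigr => i _; rewrite !mxE mulrC. Qed.

Lemma braket_ge0 n (u : 'cV[C]_n) : 0 <= braket u u.
Proof. by rewrite braket_dotmx dnorm_ge0. Qed.

Lemma braket_CauchySchwarz n (u v : 'cV[C]_n) :
  `|braket u v| <= sqrtC (braket u u) * sqrtC (braket v v).
Proof.
rewrite braket_dotmx mulrC !braket_dotmx.
by have [] := CauchySchwarz_sqrt (dotmx (n:=n)) v^T u^T.
Qed.

Lemma braketC n (u v : 'cV[C]_n) : (braket u v)^* = braket v u.
Proof.
rewrite !braketE rmorph_sum; apply: eq_bigr => i _.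
by rewrite rmorphM /= conjCK mulrC.
Qed.

Lemma gram_eq0 m n (Z : 'M[C]_(m, n)) : Z^t* *m Z = 0 -> Z = 0.
Proof.
move=> ZZ0; apply/matrixP => i k.
have /matrixP /(_ k k) := ZZ0; rewrite !mxE => sum0.
have norm_ge0 j : 0 <= (Z j k)^* * Z j k by rewrite mulrC mul_conjC_ge0.
have /psumr_eq0P : \sum_j (Z j k)^* * Z j k = 0.
  by rewrite -[RHS]sum0; apply: eq_bigr => j _; rewrite !mxE.
move=> /(_ (fun j _ => norm_ge0 j) i isT) /eqP.
by rewrite mulrC mul_conjC_eq0 => /eqP ->; rewrite ?mxE.
Qed.

Lemma braket_eq0 n (u : 'cV[C]_n) : braket u u = 0 -> u = 0.
Proof. by move=> u0; apply: gram_eq0; apply/matrixP => i j; rewrite !ord1 [RHS]mxE. Qed.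

Lemma matelDl n (A : 'M[C]_n) u w v : matel A (u + w) v = matel A u v + matel A w v.
Proof. by rewrite /matel trmxCD !mulmxDl mxE. Qed.

Lemma matelDr n (A : 'M[C]_n) u w v : matel A v (u + w) = matel A v u + matel A v w.
Proof. by rewrite /matel mulmxDr mxE. Qed.

Lemma matelNl n (A : 'M[C]_n) u v : matel A (- u) v = - matel A u v.
Proof. by rewrite /matel trmxCN !mulNmx mxE. Qed.

Lemma matelNr n (A : 'M[C]_n) u v : matel A u (- v) = - matel A u v.
Proof. by rewrite /matel mulmxN mxE. Qed.

Lemma matelZl n (A : 'M[C]_n) a u v : matel A (a *: u) v = a^* * matel A u v.
Proof. by rewrite /matel trmxCZ -!scalemxAl mxE. Qed.

Lemma matelZr n (A : 'M[C]_n) a u v : matel A u (a *: v) = a * matel A u v.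
Proof. by rewrite /matel -scalemxAr mxE. Qed.

Definition matel_linE := (matelDl, matelDr, matelNl, matelNr, matelZl, matelZr).

Lemma matel_delta n (A : 'M[C]_n) i j : matel A (delta_mx i 0) (delta_mx j 0) = A i j.
Proof.
rewrite /matel mxE (bigD1 j) //= big1 => [|k kj]; last by rewrite !mxE (negbTE kj) mulr0.
rewrite !mxE eqxx mulr1 addr0 (bigD1 i) //= big1 => [|k ki]; last first.
  by rewrite !mxE (negbTE ki) conjC0 mul0r.
by rewrite !mxE !eqxx conjC1 mul1r addr0.
Qed.

Lemma matel_conjugate n (P A : 'M[C]_n) v :
  matel (P^t* *m A *m P) v v = matel A (P *m v) (P *m v).
Proof. by rewrite /matel trmxC_mul !mulmxA. Qed.

Lemma matel_diag n (d : 'rV[C]_n) w :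
  matel (diag_mx d) w w = \sum_k d 0 k * ((w k 0)^* * w k 0).
Proof. by rewrite /matel mul_mx_diag mxE; apply: eq_bigr => k _; rewrite !mxE; ring. Qed.

Lemma matel_rank1 n (phi psi : 'cV[C]_n) :
  matel (phi *m phi^t*) psi psi = `|braket psi phi| ^+ 2.
Proof. by rewrite normCK braketC /matel /braket !mulmxA -(mulmxA (psi^t* *m phi)) [LHS]mxE big_ord1. Qed.

Lemma matel_sum n (I : finType) (a : I -> C) (M : I -> 'M[C]_n) u v :
  matel (\sum_k a k *: M k) u v = \sum_k a k * matel (M k) u v.
Proof.
rewrite /matel mulmx_sumr mulmx_suml summxE; apply: eq_bigr => k _.
by rewrite -scalemxAr -scalemxAl mxE.
Qed.

Lemma mxtrace_rank1 n (W : 'M[C]_n) (phi : 'cV[C]_n) :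
  \tr (W *m (phi *m phi^t*)) = matel W phi phi.
Proof. by rewrite mulmxA mxtrace_mulC mulmxA trace_mx11. Qed.

Lemma norm_braket_le1 n (u v : 'cV[C]_n) : braket u u = 1 -> braket v v = 1 ->
  `|braket u v| <= 1.
Proof.
move=> u1 v1; apply: le_trans (braket_CauchySchwarz _ _) _.
by rewrite u1 v1 sqrtC1 mulr1.
Qed.

Lemma unitarymx_braket n (P : 'M[C]_n) v : P \is unitarymx ->
  braket (P *m v) (P *m v) = braket v v.
Proof.
move=> uP; rewrite /braket trmxC_mul -mulmxA (mulmxA (P^t*)) unitarymx_trCmul //.
by rewrite mul1mx.
Qed.

End Braket.

Section PositiveSemidefinite.
Variable C : numClosedFieldType.

Definition psdmx n (A : 'M[C]_n) : Prop := forall v, 0 <= matel A v v.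

Lemma matel_expand n (A : 'M[C]_n) u w c :
  matel A (u + c *: w) (u + c *: w) =
  matel A u u + c * matel A u w + c^* * matel A w u + c^* * c * matel A w w.
Proof. rewrite !matel_linE; ring. Qed.

Lemma psdmx_hermitian n (A : 'M[C]_n) : psdmx A -> A^t* = A.
Proof.
(* The form is real at e_i + e_j and at e_i + 'i e_j, which forces A j i = (A i j)^*. *)
move=> psdA; apply/matrixP => i j; rewrite !mxE.
have real_matel v : (matel A v v)^* = matel A v v by apply/conj_Creal/ger0_real.
pose ei : 'cV[C]_n := delta_mx i 0; pose ej : 'cV[C]_n := delta_mx j 0.
have expand c : matel A (ei + c *: ej) (ei + c *: ej) =
    A i i + c * A i j + c^* * A j i + c^* * c * A j j.
  by rewrite matel_expand !matel_delta.
have Aii : (A i i)^* = A i i by rewrite -matel_delta real_matel.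
have Ajj : (A j j)^* = A j j by rewrite -matel_delta real_matel.
move: (real_matel (ei + 1 *: ej)) (real_matel (ei + 'i *: ej)).
rewrite !expand !rmorphD !rmorphM /= !conjCK conjC1 conjCi Aii Ajj.
move=> /eqP; rewrite -subr_eq0; set L1 := (_ - _) => /eqP real1.
move=> /eqP; rewrite -subr_eq0; set Li := (_ - _) => /eqP reali.
have ii : 'i * 'i = -1 :> C by rewrite -expr2 sqrCi.
have : 2 * (A i j - (A j i)^*) = - L1 + 'i * Li
    - ('i * 'i + 1) * ((A j i)^* - (A i j)^* + A j i - A i j).
  by rewrite /L1 /Li; ring.
rewrite real1 reali ii addNr !mul0r mulr0 !subr0 oppr0 addr0.
by move/eqP; rewrite mulf_eq0 pnatr_eq0 /= subr_eq0 => /eqP.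
Qed.

Lemma mxtrace_psdmx_ge0 n (A : 'M[C]_n) : psdmx A -> 0 <= \tr A.
Proof. by move=> psdA; rewrite sumr_ge0 // => i _; rewrite -matel_delta. Qed.

Lemma psdmx_diag n (d : 'rV[C]_n) : (forall k, 0 <= d 0 k) -> psdmx (diag_mx d).
Proof.
move=> d_ge0 v; rewrite matel_diag; apply: sumr_ge0 => k _.
by rewrite mulr_ge0 // mulrC mul_conjC_ge0.
Qed.

Lemma psdmx_conjugate n (P A : 'M[C]_n) : psdmx A -> psdmx (P^t* *m A *m P).
Proof. by move=> psdA v; rewrite matel_conjugate. Qed.

Lemma psdmx_gram m n (X : 'M[C]_(m, n)) : psdmx (X^t* *m X).
Proof. by move=> v; rewrite /matel !mulmxA -(mulmxA (v^t* *m X^t*)) -trmxC_mul braket_ge0. Qed.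

Lemma psdmx_rank1 n (phi : 'cV[C]_n) : psdmx (phi *m phi^t*).
Proof. by move=> v; rewrite matel_rank1 exprn_ge0. Qed.

Lemma psdmx_spectral n (A : 'M[C]_n) : psdmx A ->
  exists P (d : 'rV[C]_n),
    [/\ P \is unitarymx, forall k, 0 <= d 0 k & A = P^t* *m diag_mx d *m P].
Proof.
move=> psdA; have normalA : A \is normalmx.
  by apply/normalmxP; rewrite psdmx_hermitian.
move/orthomx_spectralP: normalA; set P := spectralmx A; set d := spectral_diag A.
have uP : P \is unitarymx := spectral_unitarymx A.
rewrite invmx_unitary // => AE.
exists P, d; split => // k.
have := psdA (P^t* *m delta_mx k 0).
rewrite [X in matel X _ _]AE matel_conjugate !mulmxA (unitarymxP uP) mul1mx.
by rewrite matel_delta mxE eqxx mulr1n.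
Qed.

Lemma psdmx_sqrt n (A : 'M[C]_n) : psdmx A -> exists B, psdmx B /\ B *m B = A.
Proof.
move=> /psdmx_spectral [P [d [uP d_ge0 ->]]].
exists (P^t* *m diag_mx (map_mx sqrtC d) *m P); split.
  by apply/psdmx_conjugate/psdmx_diag => k; rewrite mxE sqrtC_ge0.
rewrite !mulmxA -(mulmxA _ P) (unitarymxP uP) mulmx1 -!mulmxA; congr (_ *m _).
rewrite mulmxA mulmx_diag; congr (diag_mx _ *m _).
by apply/rowP => k; rewrite !mxE -expr2 sqrtCK.
Qed.

Lemma density_decomposition n (sigma : 'M[C]_n) : psdmx sigma -> \tr sigma = 1 ->
  exists (p : 'I_n -> C) (phi : 'I_n -> 'cV[C]_n),
    [/\ forall k, 0 <= p k, \sum_k p k = 1, forall k, braket (phi k) (phi k) = 1 &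
        sigma = \sum_k p k *: (phi k *m (phi k)^t*)].
Proof.
move=> /psdmx_spectral [P [d [uP d_ge0 sigmaE]]] tr1.
exists (fun k => d 0 k), (fun k => col k (P^t*)); split => //.
- by rewrite -tr1 sigmaE mxtrace_mulC mulmxA (unitarymxP uP) mul1mx mxtrace_diag.
- move=> k; rewrite braketE; have /matrixP/(_ k k) := unitarymxP uP.
  rewrite !mxE eqxx mulr1n => <-.
  by apply: eq_bigr => i _; rewrite !mxE conjCK mulrC.
apply/matrixP => i j; rewrite sigmaE mul_mx_diag !mxE summxE.
apply: eq_bigr => k _; rewrite !mxE big_ord1 !mxE conjCK; ring.
Qed.

Lemma matel_density_le1 n (sigma : 'M[C]_n) psi : psdmx sigma -> \tr sigma = 1 ->
  braket psi psi = 1 -> matel sigma psi psi <= 1.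
Proof.
move=> /density_decomposition /[apply] -[p [phi [p_ge0 p_sum1 phi1 ->]]] psi1.
rewrite matel_sum -p_sum1 ler_sum // => k _; rewrite matel_rank1 ler_piMr //.
by rewrite exprn_ile1 ?norm_braket_le1.
Qed.

End PositiveSemidefinite.

Section Contraction.
Variable C : numClosedFieldType.

Definition contraction m n (W : 'M[C]_(m, n)) :=
  forall v, braket (W *m v) (W *m v) <= braket v v.

(* Since 0^-1 = 0, the row (d 0 k)^-1 * d 0 k is the indicator of the support of d. *)
Lemma gram_diag_support m n (Y : 'M[C]_(m, n)) (d : 'rV[C]_n) :
  Y^t* *m Y = diag_mx d *m diag_mx d ->
  Y *m diag_mx (\row_k ((d 0 k)^-1 * d 0 k)) = Y.
Proof.
move=> YY; pose z := \row_k (1 - (d 0 k)^-1 * d 0 k).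
have Yz0 : Y *m diag_mx z = 0.
  apply: gram_eq0; rewrite trmxC_mul trmxC_diag -mulmxA (mulmxA (Y^t*)) YY !mulmx_diag.
  apply/matrixP => i j; rewrite !mxE; case: (i == j); rewrite ?mulr1n ?mulr0n //.
  have [->|d0] := eqVneq (d 0 i) 0; first by ring.
  by rewrite mulVf // subrr conjC0; ring.
have -> : diag_mx (\row_k ((d 0 k)^-1 * d 0 k)) = 1%:M - diag_mx z.
  apply/matrixP => i j; rewrite !mxE.
  by case: (i == j); rewrite ?mulr1n ?mulr0n ?subr0 // opprB addrC subrK.
by rewrite mulmxBr Yz0 subr0 mulmx1.
Qed.

Lemma contraction_diag n (e : 'rV[C]_n) (G : 'M[C]_n) :
  (forall k, 0 <= e 0 k <= 1) -> G^t* *m G = diag_mx e -> contraction G.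
Proof.
move=> e01 GG v; rewrite /braket trmxC_mul -mulmxA (mulmxA (G^t*)) GG.
rewrite mulmxA -/(matel _ v v) matel_diag -/(braket v v) braketE ler_sum // => k _.
have /andP [e_ge0 e_le1] := e01 k.
by rewrite ler_piMl // mulrC mul_conjC_ge0.
Qed.

Lemma modulus_svd n (X B : 'M[C]_n) : psdmx B -> B *m B = X^t* *m X ->
  exists P G (d : 'rV[C]_n),
    [/\ P \is unitarymx, contraction G & G^t* *m G *m diag_mx d = diag_mx d] /\
    [/\ forall k, 0 <= d 0 k, X = G *m diag_mx d *m P & \tr B = \sum_k d 0 k].
Proof.
move=> /psdmx_spectral [P [d [uP d_ge0 BE]]] BB.
pose Y := X *m P^t*; pose e := \row_k ((d 0 k)^-1 * d 0 k).
have YY : Y^t* *m Y = diag_mx d *m diag_mx d.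
  rewrite /Y trmxC_mul trmxCK mulmxA -(mulmxA P) -BB BE.
  by rewrite !mulmxA (unitarymxP uP) mul1mx !mulmxtVK.
pose G := Y *m diag_mx (map_mx GRing.inv d).
have GG : G^t* *m G = diag_mx e.
  rewrite /G trmxC_mul trmxC_diag -mulmxA (mulmxA (Y^t*)) YY !mulmx_diag.
  congr diag_mx; apply/rowP => k; rewrite !mxE (conj_Creal (ger0_real _)) ?invr_ge0 //.
  have [->|d0] := eqVneq (d 0 k) 0; first by rewrite invr0 !mul0r.
  by rewrite mulVf //; field.
exists P, G, d; split; split => //.
- apply: contraction_diag GG => k; rewrite mxE.
  by have [->|d0] := eqVneq (d 0 k) 0; rewrite ?mulr0 ?mulVf ?lexx ?ler01.
- rewrite GG mulmx_diag; congr diag_mx; apply/rowP => k; rewrite !mxE.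
  by have [->|d0] := eqVneq (d 0 k) 0; rewrite ?mulr0 ?mulVf ?mul1r.
- rewrite -[LHS](mulmxKtV _ uP) // -/Y -{1}(gram_diag_support YY); congr (_ *m P).
  rewrite /G -mulmxA mulmx_diag; congr (_ *m diag_mx _).
  by apply/rowP => k; rewrite !mxE.
- by rewrite BE mxtrace_mulC mulmxA (unitarymxP uP) mul1mx mxtrace_diag.
Qed.

End Contraction.

Section TraceBounds.
Variable C : numClosedFieldType.

Lemma jensen_sqrtC (I : finType) (p x : I -> C) :
  (forall k, 0 <= p k) -> (forall k, 0 <= x k) -> \sum_k p k = 1 ->
  \sum_k p k * sqrtC (x k) <= sqrtC (\sum_k p k * x k).
Proof.
move=> p_ge0 x_ge0 p_sum1; set m := \sum_k p k * sqrtC (x k).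
have m_ge0 : 0 <= m by apply: sumr_ge0 => k _; rewrite mulr_ge0 ?sqrtC_ge0.
have variance : \sum_k p k * x k - m ^+ 2 = \sum_k p k * (sqrtC (x k) - m) ^+ 2.
  transitivity (\sum_k (p k * x k + (- 2 * m) * (p k * sqrtC (x k)) + m ^+ 2 * p k)).
    by rewrite !big_split /= -!mulr_sumr p_sum1 -/m; ring.
  by apply: eq_bigr => k _; rewrite -{1}(sqrtCK (x k)); ring.
rewrite -(sqrCK m_ge0) ler_sqrtC ?nnegrE ?exprn_ge0 //; last first.
  by apply: sumr_ge0 => k _; rewrite mulr_ge0.
rewrite -subr_ge0 variance sumr_ge0 // => k _; rewrite mulr_ge0 // -realEsqr.
by rewrite rpredB // ger0_real ?sqrtC_ge0.
Qed.

Lemma contraction_matel_bound n (W : 'M[C]_n) a b : contraction (W^t*) ->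
  `|matel W a b| <= sqrtC (braket a a) * sqrtC (braket b b).
Proof.
move=> cW; have -> : matel W a b = braket (W^t* *m a) b.
  by rewrite /matel /braket trmxC_mul trmxCK.
apply: le_trans (braket_CauchySchwarz _ _) _.
by rewrite ler_wpM2r ?sqrtC_ge0 ?braket_ge0 // ler_sqrtC ?nnegrE ?braket_ge0.
Qed.

Lemma unit_phase (c : C) : exists2 w, w^* * w = 1 & w * c = `|c|.
Proof.
have [->|c0] := eqVneq c 0; first by exists 1; rewrite ?conjC1 ?mulr1 ?normr0 ?mulr0.
have nc0 : `|c| != 0 by rewrite normr_eq0.
exists (c^* / `|c|).
  rewrite rmorphM /= fmorphV /= conjCK (conj_Creal (normr_real c)).
  by rewrite mulrACA -invfM -normCK divff // expf_neq0.
by rewrite mulrAC [c^* * c]mulrC -normCK expr2 mulfK.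
Qed.

Lemma sqrtC_mul_sub_add (x : C) : 0 <= 2 - 2 * x -> 0 <= 2 + 2 * x ->
  sqrtC (2 - 2 * x) * sqrtC (2 + 2 * x) = 2 * sqrtC (1 - x ^+ 2).
Proof.
move=> sub_ge0 add_ge0; rewrite -sqrtCM ?nnegrE //.
have -> : (2 - 2 * x) * (2 + 2 * x) = 2 ^+ 2 * (1 - x ^+ 2) by ring.
rewrite sqrtCM ?nnegrE ?exprn_ge0 ?sqrCK //.
have -> : 1 - x ^+ 2 = (2 - 2 * x) * (2 + 2 * x) / 4 by field.
by rewrite divr_ge0 ?mulr_ge0.
Qed.

Lemma contraction_matel_pure_diff n (W : 'M[C]_n) phi psi : contraction (W^t*) ->
  braket phi phi = 1 -> braket psi psi = 1 ->
  `|matel W phi phi - matel W psi psi| <= 2 * sqrtC (1 - `|braket psi phi| ^+ 2).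
Proof.
move=> cW phi1 psi1; set c := braket psi phi.
have [w w1 wc] := unit_phase c.
have c_real : `|c|^* = `|c| := conj_Creal (normr_real c).
(* The rephased vector phi' has a real nonnegative overlap with psi. *)
pose phi' := w *: phi.
have W_phi' : matel W phi' phi' = matel W phi phi.
  by rewrite matelZl matelZr mulrA w1 mul1r.
have psi_phi' : braket psi phi' = `|c| by rewrite !braket_matel matelZr -braket_matel wc.
have phi'_psi : braket phi' psi = `|c| by rewrite -braketC psi_phi' c_real.
have phi'1 : braket phi' phi' = 1.
  by rewrite braket_matel matelZl matelZr -braket_matel mulrA w1 mul1r.
clearbody phi'.
have polar : 2 * (matel W phi' phi' - matel W psi psi) =
    matel W (phi' - psi) (phi' + psi) + matel W (phi' + psi) (phi' - psi).
  by rewrite !matel_linE; ring.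
have norm_sub : braket (phi' - psi) (phi' - psi) = 2 - 2 * `|c|.
  by rewrite !braket_matel !matel_linE -!braket_matel psi_phi' phi'_psi phi'1 psi1; ring.
have norm_add : braket (phi' + psi) (phi' + psi) = 2 + 2 * `|c|.
  by rewrite !braket_matel !matel_linE -!braket_matel psi_phi' phi'_psi phi'1 psi1; ring.
have sub_ge0 : 0 <= 2 - 2 * `|c| by rewrite -norm_sub braket_ge0.
have add_ge0 : 0 <= 2 + 2 * `|c| by rewrite -norm_add braket_ge0.
rewrite -W_phi' -(ler_pM2l (_ : 0 < 2)) // -[X in X * `|_|]normr_nat -normrM polar.
apply: le_trans (ler_normD _ _) _.
apply: le_trans (lerD (contraction_matel_bound _ _ cW) (contraction_matel_bound _ _ cW)) _.
by rewrite norm_sub norm_add [sqrtC (2 + _) * sqrtC (2 - _)]mulrC sqrtC_mul_sub_add // [leRHS]mulr_natl mulr2n.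
Qed.

Lemma contraction_trace_mixed_diff n (W sigma : 'M[C]_n) psi : contraction (W^t*) ->
  psdmx sigma -> \tr sigma = 1 -> braket psi psi = 1 ->
  `|\tr (W *m sigma) - matel W psi psi| <= 2 * sqrtC (1 - matel sigma psi psi).
Proof.
move=> cW /density_decomposition /[apply] -[p [phi [p_ge0 p_sum1 phi1 ->]]] psi1.
have infidelity_ge0 k : 0 <= 1 - `|braket psi (phi k)| ^+ 2.
  by rewrite subr_ge0 exprn_ile1 ?norm_braket_le1.
have -> : 1 - matel (\sum_k p k *: (phi k *m (phi k)^t*)) psi psi =
    \sum_k p k * (1 - `|braket psi (phi k)| ^+ 2).
  rewrite matel_sum -[X in X - _]p_sum1 -sumrB.
  by apply: eq_bigr => k _; rewrite matel_rank1 mulrBr mulr1.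
have -> : \tr (W *m \sum_k p k *: (phi k *m (phi k)^t*)) - matel W psi psi =
    \sum_k p k * (matel W (phi k) (phi k) - matel W psi psi).
  rewrite mulmx_sumr raddf_sum -[X in _ - X]mul1r -p_sum1 mulr_suml -sumrB.
  by apply: eq_bigr => k _; rewrite /= -scalemxAr mxtraceZ mxtrace_rank1 mulrBr.
apply: le_trans (ler_norm_sum _ _ _) _.
apply: (@le_trans _ _ (\sum_k p k * (2 * sqrtC (1 - `|braket psi (phi k)| ^+ 2)))).
  apply: ler_sum => k _; rewrite normrM ger0_norm // ler_wpM2l //.
  exact: contraction_matel_pure_diff.
under eq_bigr do rewrite mulrCA.
by rewrite -mulr_sumr ler_wpM2l // jensen_sqrtC.
Qed.

Lemma trnorm_witness n (X B : 'M[C]_n) : psdmx B -> B *m B = X^t* *m X ->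
  exists W, contraction (W^t*) /\ \tr (W *m X) = \tr B.
Proof.
move=> /modulus_svd /[apply] -[P [G [d [[uP cG GGd] [_ -> ->]]]]].
exists (P^t* *m G^t*); split.
  by move=> v; rewrite trmxC_mul !trmxCK -mulmxA -(unitarymx_braket v uP) cG.
rewrite !mulmxA -(mulmxA _ (G^t*)) mxtrace_mulC !mulmxA (unitarymxP uP) mul1mx.
by rewrite GGd mxtrace_diag.
Qed.

End TraceBounds.

Section FunctionalBound.
Variables (C : numClosedFieldType) (n : nat) (Phi : 'M[C]_n -> C) (b : C).
Hypothesis PhiD : forall M N, Phi (M + N) = Phi M + Phi N.
Hypothesis PhiZ : forall a M, Phi (a *: M) = a * Phi M.
Hypothesis b_ge0 : 0 <= b.
Hypothesis Phi_pure : forall psi, braket psi psi = 1 -> `|Phi (psi *m psi^t*)| <= b.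

Let Phi0 : Phi 0 = 0.
Proof. by rewrite -(scale0r 0) PhiZ mul0r. Qed.

Let PhiN M : Phi (- M) = - Phi M.
Proof. by rewrite -scaleN1r PhiZ mulN1r. Qed.

Lemma functional_gram_bound h : `|Phi (h *m h^t*)| <= b * braket h h.
Proof.
have [->|h0] := eqVneq h 0; first by rewrite mul0mx Phi0 normr0 mulr_ge0 ?braket_ge0.
have hh_ge0 := braket_ge0 h; set a := sqrtC (braket h h).
have a0 : a != 0 by rewrite sqrtC_eq0; apply: contra h0 => /eqP /braket_eq0 ->.
have a_ge0 : 0 <= a by rewrite sqrtC_ge0.
have ainv_real : (a^-1)^* = a^-1 by apply/conj_Creal/ger0_real; rewrite invr_ge0.
pose psi := a^-1 *: h.
have psi1 : braket psi psi = 1.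
  rewrite braket_matel matelZl matelZr -braket_matel ainv_real mulrA.
  by rewrite -invfM -expr2 sqrtCK mulVf // -sqrtC_eq0.
have -> : h *m h^t* = braket h h *: (psi *m psi^t*).
  rewrite /psi trmxCZ ainv_real -scalemxAl -scalemxAr !scalerA -[braket h h]sqrtCK -/a.
  by rewrite expr2 mulfK // mulfV // scale1r.
by rewrite PhiZ normrM ger0_norm // mulrC ler_wpM2r ?Phi_pure.
Qed.

Lemma functional_outer_bound g q : `|Phi (g *m q^t*)| <= b * (braket g g + braket q q).
Proof.
have ii : 'i * 'i = -1 :> C by rewrite -expr2 sqrCi.
pose h1 := g + q; pose h2 := g - q; pose h3 := g + 'i *: q; pose h4 := g - 'i *: q.
(* Abstracting 'i to any t with t * t = -1 lets ring check the identity modulo t * t + 1. *)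
have polar4 (t u v u' v' : C) : t * t = -1 ->
    4 * (u * v') = (u + v) * (u' + v') - (u - v) * (u' - v')
      + t * ((u + t * v) * (u' + - t * v')) - t * ((u - t * v) * (u' - - t * v')).
  move=> tt; apply/eqP; rewrite -subr_eq0; apply/eqP.
  transitivity ((t * t + 1) * (2 * (u * v' - v * u'))); first by ring.
  by rewrite tt addNr mul0r.
have polar : 4 *: (g *m q^t*) = h1 *m h1^t* - h2 *m h2^t*
    + 'i *: (h3 *m h3^t*) - 'i *: (h4 *m h4^t*).
  apply/matrixP => i j; rewrite !mxE !big_ord1 !mxE !rmorphD !rmorphN !rmorphM /= conjCi.
  by rewrite (polar4 'i (g i 0) (q i 0) (g j 0)^*) //; ring.
have norms : braket h1 h1 + braket h2 h2 + braket h3 h3 + braket h4 h4 =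
    4 * (braket g g + braket q q).
  rewrite !braket_matel !matel_linE -!braket_matel conjCi.
  transitivity (4 * (braket g g + braket q q) - 2 * ('i * 'i + 1) * braket q q).
    by ring.
  by rewrite ii addNr mulr0 mul0r subr0.
rewrite -(ler_pM2l (_ : 0 < 4)) // -[X in X * `|_|]normr_nat -normrM -PhiZ polar.
rewrite !PhiD !PhiN !PhiZ mulrCA -norms !mulrDr.
apply: (@le_trans _ _ (`|Phi (h1 *m h1^t*)| + `|Phi (h2 *m h2^t*)| +
    `|Phi (h3 *m h3^t*)| + `|Phi (h4 *m h4^t*)|)); last by rewrite !lerD ?functional_gram_bound.
apply: le_trans (ler_normB _ _) _; rewrite normrM normCi mul1r lerD2r.
apply: le_trans (ler_normD _ _) _; rewrite normrM normCi mul1r lerD2r.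
exact: ler_normB.
Qed.

Lemma functional_modulus_bound X B : psdmx B -> B *m B = X^t* *m X ->
  `|Phi X| <= 2 * b * \tr B.
Proof.
move=> /modulus_svd /[apply] -[P [G [d [[uP cG _] [d_ge0 -> ->]]]]].
rewrite mulmx_diag_sum (big_morph Phi PhiD Phi0) mulr_sumr.
apply: le_trans (ler_norm_sum _ _ _) _; apply: ler_sum => k _.
rewrite PhiZ normrM ger0_norm // [_ * d 0 k]mulrC ler_wpM2l // -[row k P]trmxCK.
apply: le_trans (functional_outer_bound _ _) _; rewrite [2 * b]mulrC ler_wpM2l //.
have Gk_le1 : braket (col k G) (col k G) <= 1.
  by rewrite colE (le_trans (cG _)) // braket_matel matel_delta mxE eqxx.
have Pk1 : braket ((row k P)^t*) ((row k P)^t*) = 1.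
  rewrite braketE; have /matrixP/(_ k k) := unitarymxP uP; rewrite !mxE eqxx mulr1n => <-.
  by apply: eq_bigr => i _; rewrite !mxE conjCK mulrC.
by rewrite Pk1 -[2]/(1 + 1) lerD2r.
Qed.

End FunctionalBound.

Section Supremum.
Variable R : realType.
Local Open Scope classical_set_scope.
Implicit Types (E : set R) (y : R).

Lemma sup_ge0 E : (forall x, E x -> 0 <= x) -> has_ubound E -> 0 <= sup E.
Proof.
move=> E_ge0 ubE; have [->|/set0P [x Ex]] := eqVneq E set0; first by rewrite sup0.
exact: le_trans (E_ge0 _ Ex) (ub_le_sup ubE Ex).
Qed.

Lemma sup_le_ge0 E y : 0 <= y -> ubound E y -> sup E <= y.
Proof.
move=> y_ge0 Ey; have [->|/set0P E0] := eqVneq E set0; first by rewrite sup0.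
exact: ge_sup.
Qed.

End Supremum.

Section Channel.
Variable R : realType.
Local Notation C := R[i].

Lemma ger0_complexRe (z : C) : 0 <= z -> z = ((complex.Re z)%:C)%C.
Proof. by case: z => a b; rewrite lecE /= => /andP [/eqP-> _]. Qed.

Lemma sqrtC_complexR (x : R) : 0 <= x -> sqrtC (x%:C)%C = ((Num.sqrt x)%:C)%C.
Proof.
move=> x_ge0; have sqrt_sqr : ((Num.sqrt x)%:C)%C ^+ 2 = (x%:C)%C :> C.
  by rewrite -rmorphXn /= sqr_sqrtr.
by rewrite -sqrt_sqr sqrCK // ler0c sqrtr_ge0.
Qed.

Lemma adjE m k (A : 'M[C]_(m, k)) : adj A = A^t*.
Proof. by rewrite /adj map_trmx. Qed.

Lemma psdE n (A : 'M[C]_n) : psd A <-> psdmx A.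
Proof. by split=> psdA v; have := psdA v; rewrite /matel adjE. Qed.

Lemma trnormP n (A : 'M[C]_n) :
  exists B, [/\ psdmx B, B *m B = A^t* *m A & \tr B = ((trnorm A)%:C)%C].
Proof.
have [B [psdB BB]] := psdmx_sqrt (psdmx_gram A).
have : exists t : R, exists B : 'M[C]_n,
    psd B /\ B *m B = adj A *m A /\ \tr B = (t%:C)%C.
  exists (complex.Re (\tr B)), B; rewrite psdE adjE.
  by split; last split; rewrite // -ger0_complexRe // mxtrace_psdmx_ge0.
move=> /(xgetPex 0) [B' [/psdE psdB' [B'B' trB']]].
by exists B'; rewrite -adjE.
Qed.

Lemma channel_psdmx n (T : 'M[C]_n -> 'M[C]_n) M :
  completely_positive T -> psdmx M -> psdmx (T M).
Proof.
move=> cpT psdM v.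
have psd1 : block_psd (fun _ _ : 'I_1 => M) by move=> w; rewrite !big_ord1 adjE; apply: psdM.
by have := cpT 1%N _ psd1 (fun=> v); rewrite !big_ord1 adjE.
Qed.

Section ChannelBounds.
Variables (n : nat) (T : {linear 'M[C]_n -> 'M[C]_n}).
Hypothesis chT : channel T.

Let fidelity (psi : 'cV[C]_n) : R := complex.Re (matel (T (psi *m psi^t*)) psi psi).

Lemma channel_pure_bound W psi : contraction (W^t*) -> braket psi psi = 1 ->
  `|\tr (W *m (T (psi *m psi^t*) - psi *m psi^t*))| <=
  2 * ((Num.sqrt (1 - fidelity psi))%:C)%C.
Proof.
move=> cW psi1; have [cpT tpT] := chT.
have psd_sigma := channel_psdmx cpT (psdmx_rank1 psi).
have tr_sigma : \tr (T (psi *m psi^t*)) = 1 by rewrite tpT mxtrace_mulC trace_mx11.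
have infidelityE : 1 - matel (T (psi *m psi^t*)) psi psi = ((1 - fidelity psi)%:C)%C.
  by rewrite (ger0_complexRe (psd_sigma psi)) rmorphB rmorph1.
have infidelity_ge0 : 0 <= 1 - fidelity psi.
  by rewrite -ler0c -infidelityE subr_ge0 matel_density_le1.
rewrite mulmxBr raddfB /= mxtrace_rank1 -sqrtC_complexR // -infidelityE.
exact: contraction_trace_mixed_diff.
Qed.

Lemma channel_trnorm_bound (s : R) : 0 <= s ->
  (forall psi, braket psi psi = 1 -> Num.sqrt (1 - fidelity psi) <= s) ->
  forall rho, trnorm (T rho - rho) <= 4 * s * trnorm rho.
Proof.
move=> s_ge0 s_ub rho.
have [B0 [psdB0 B0B0 trB0]] := trnormP rho.
have [B [psdB BB trB]] := trnormP (T rho - rho).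
have [W [cW trW]] := trnorm_witness psdB BB.
pose Phi M := \tr (W *m (T M - M)).
have PhiD M N : Phi (M + N) = Phi M + Phi N.
  by rewrite /Phi linearD opprD addrACA mulmxDr mxtraceD.
have PhiZ a M : Phi (a *: M) = a * Phi M.
  by rewrite /Phi linearZ /= -scalerBr -scalemxAr mxtraceZ.
have Phi_pure psi : braket psi psi = 1 -> `|Phi (psi *m psi^t*)| <= 2 * (s%:C)%C.
  move=> psi1; apply: le_trans (channel_pure_bound cW psi1) _.
  by rewrite ler_wpM2l // lecR s_ub.
have b_ge0 : 0 <= 2 * (s%:C)%C :> C by rewrite mulr_ge0 ?ler0c.
have := functional_modulus_bound PhiD PhiZ b_ge0 Phi_pure psdB0 B0B0.
rewrite /Phi trW ger0_norm ?mxtrace_psdmx_ge0 // trB trB0.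
by rewrite -lecR !rmorphM /= rmorph_nat mulrA -natrM.
Qed.

End ChannelBounds.

End Channel.

Theorem lemma2 (R : realType) (n : nat) (T : {linear 'M[R[i]]_n -> 'M[R[i]]_n}) :
  channel T ->
  opnorm (fun rho => T rho - rho) <=
  4 * sup [set Num.sqrt (1 - complex.Re ((adj psi *m T (psi *m adj psi) *m psi) 0 0))
          | psi in [set psi : 'cV[R[i]]_n | (adj psi *m psi) 0 0 = 1]].
Proof.
move=> chT; set S := (X in sup X).
have S_le1 : ubound S 1.
  move=> _ [psi _ <-]; rewrite -[leRHS]sqrtr1 ler_sqrt // lerBlDr lerDl.
  have := channel_psdmx chT.1 (psdmx_rank1 psi) psi.
  by rewrite /matel -!adjE lecE => /andP [].
have S_ub : ubound S (sup S) := ub_le_sup (ex_intro _ 1 S_le1).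
have sup_S_ge0 : 0 <= sup S.
  by apply: sup_ge0 (ex_intro _ 1 S_le1) => _ [? _ <-]; rewrite sqrtr_ge0.
apply: sup_le_ge0 => [|_ [rho rho_le1 <-]]; first by rewrite mulr_ge0.
apply: le_trans (channel_trnorm_bound chT sup_S_ge0 _ rho) _.
  by move=> psi psi1; apply: S_ub; exists psi; rewrite /= adjE.
by rewrite ler_piMr // mulr_ge0.
Qed.
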